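(* Let $X=(B\,|\,A)\in\mathbb{Z}^{d\times N}$ with $B\in\mathbb{Z}^{d\times d}$ a diagonal matrix of full rank $d$ and $A\in\mathbb{Z}^{d\times(N-d)}$, and let $P$ be a coordinatizing path. For each of the $2^{N-\kappa(A)}$ possible choices of signs of the entries of $P$, there is a unique matrix $X_\sigma=(B\,|\,A_\sigma)$ whose entries at the positions of $P$ have these signs and which represents the same arithmetic matroid $\mathcal{A}(X)$. Moreover, every representation of $\mathcal{A}(X)$ of the form $(B\,|\,A'')$ (i.e. in $B$-basic form for this $B$) is one of the matrices $X_\sigma$.
   Context: The arithmetic matroid $\mathcal{A}(X)$ represented by $X\in\mathbb{Z}^{d\times N}$ with columns $x_1,\dots,x_N$ is $([N],\operatorname{rk},m)$ where $\operatorname{rk}(S)$ is the dimension of the real span $\langle S\rangle_{\mathbb{R}}$ of $\{x_e:e\in S\}$ and $m(S)=|(\langle S\rangle_{\mathbb{R}}\cap\mathbb{Z}^d)/\langle S\rangle|$, with $\langle S\rangle$ the subgroup generated by $\{x_e:e\in S\}$. Index the columns of $A$ by $d+1,\dots,N$. Let $\mathcal{G}_A$ be the bipartite graph on vertices $\{r_1,\dots,r_d\}\cup\{c_{d+1},\dots,c_N\}$ with an edge $\{r_i,c_j\}$ iff $a_{ij}\ne0$; edges are identified with non-zero entries of $A$. $\kappa(A)$ is the number of connected components of $\mathcal{G}_A$. A coordinatizing path is the set of entries of $A$ corresponding to the edges of a spanning forest of $\mathcal{G}_A$; it has $N-\kappa(A)$ elements. *)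

From Stdlib Require Import Reals.
From HB Require Import structures.
From mathcomp Require Import all_boot all_order all_algebra.
From mathcomp Require Import Rstruct.
Set Implicit Arguments. Unset Strict Implicit. Unset Printing Implicit Defensive.
Import Order.TTheory GRing.Theory Num.Theory.
Local Open Scope ring_scope.

Definition toR (d N : nat) (X : 'M[int]_(d, N)) : 'M[R]_(d, N) :=
  map_mx (fun z : int => z%:~R) X.

(** rk(S) = dim of the real span of the columns x_e, e in S
    (= rank of the real matrix whose columns outside S are zeroed). *)
Definition arank (d N : nat) (X : 'M[int]_(d, N)) (S : {set 'I_N}) : nat :=
  \rank (toR (\matrix_(i < d, j < N) (if j \in S then X i j else 0))).

Definition in_real_span (d N : nat) (X : 'M[int]_(d, N)) (S : {set 'I_N})
  (v : 'cV[int]_d) : Prop :=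
  exists c : 'I_N -> R, toR v = \sum_(e in S) c e *: col e (toR X).

Definition in_int_span (d N : nat) (X : 'M[int]_(d, N)) (S : {set 'I_N})
  (v : 'cV[int]_d) : Prop :=
  exists c : 'I_N -> int, v = \sum_(e in S) c e *: col e X.

(** m(S) = k : the quotient group (<S>_R ∩ Z^d) / <S> has exactly k elements,
    i.e. there are k representatives, pairwise non-congruent mod <S>,
    covering <S>_R ∩ Z^d modulo <S>. *)
Definition amult_is (d N : nat) (X : 'M[int]_(d, N)) (S : {set 'I_N}) (k : nat)
  : Prop :=
  exists f : 'I_k -> 'cV[int]_d,
    [/\ forall a, in_real_span X S (f a),
        forall a b, in_int_span X S (f a - f b) -> a = b
      & forall v, in_real_span X S v -> exists a, in_int_span X S (v - f a)].

Definition same_arith_matroid (d N : nat) (X Y : 'M[int]_(d, N)) : Prop :=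
  forall S : {set 'I_N},
    arank X S = arank Y S /\ (forall k, amult_is X S k <-> amult_is Y S k).

(** The bipartite graph G_A: vertices inl i = r_i (rows), inr j = c_j (columns);
    an entry set E (positions (i,j)) gives the edges {r_i, c_j}, (i,j) in E. *)
Definition bip_adj (d n : nat) (E : {set 'I_d * 'I_n}) : rel ('I_d + 'I_n) :=
  fun u v => match u, v with
             | inl i, inr j => (i, j) \in E
             | inr j, inl i => (i, j) \in E
             | _, _ => false
             end.

Definition support_entries (d n : nat) (A : 'M[int]_(d, n)) : {set 'I_d * 'I_n} :=
  [set p | A p.1 p.2 != 0].

Definition has_cycle (d n : nat) (E : {set 'I_d * 'I_n}) : Prop :=
  exists s : seq ('I_d + 'I_n), [/\ (3 <= size s)%N, uniq s & cycle (bip_adj E) s].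

(** P is a coordinatizing path of A: the entries of a spanning forest of G_A. *)
Definition coordinatizing_path (d n : nat) (A : 'M[int]_(d, n))
  (P : {set 'I_d * 'I_n}) : Prop :=
  [/\ P \subset support_entries A,
      ~ has_cycle P
    & forall u v, connect (bip_adj P) u v = connect (bip_adj (support_entries A)) u v].

Definition has_signs (d n : nat) (A' : 'M[int]_(d, n)) (P : {set 'I_d * 'I_n})
  (sigma : 'I_d * 'I_n -> bool) : Prop :=
  forall p, p \in P -> if sigma p then 0 < A' p.1 p.2 else A' p.1 p.2 < 0.

From Stdlib Require Import Reals Classical.
From mathcomp Require Import all_boot all_order all_algebra.
From mathcomp Require Import Rstruct fingroup perm zify.
Set Implicit Arguments. Unset Strict Implicit. Unset Printing Implicit Defensive.
Import Order.TTheory GRing.Theory Num.Theory.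
Local Open Scope ring_scope.

(* The multiplicity of a basis of columns of (B | A) is the index of the lattice it
   spans, i.e. the absolute value of its determinant (Smith normal form).  Replacing
   column i of the diagonal B by column j of A gives |A i j| times the other diagonal
   entries, so the arithmetic matroid determines |A i j|.

   Existence: multiplying rows and columns by signs preserves the arithmetic matroid
   and, done with the same sign on row i and column i, fixes B; on the forest P every
   sign pattern of the entries is reached in this way.

   Uniqueness: if two representations with the same signs on P differ somewhere, a
   shortest walk of common nonzero entries closing up a differing entry is a chordless
   cycle of the support graph.  The corresponding basis has a determinant with exactly
   two Leibniz terms, x + y, and flipping the sign of the one differing entry turns it
   into x - y, which has a different absolute value. *)

Section SubgroupIndex.
Variable V : zmodType.
Implicit Type L : V -> Prop.

Definition has_index L k := exists f : 'I_k -> V,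
  (forall a b, L (f a - f b) -> a = b) /\ (forall v, exists a, L (v - f a)).

Lemma has_index_leq L k k' : (forall x y, L x -> L y -> L (x - y)) ->
  has_index L k -> has_index L k' -> (k <= k')%N.
Proof.
move=> Lsub [f [f_inj _]] [g [_ g_cover]].
have [h hP] := fin_all_exists (fun a => g_cover (f a)).
have h_inj : injective h.
  move=> a b hab; apply: f_inj.
  by have := Lsub _ _ (hP a) (hP b); rewrite hab opprB addrA subrK.
by have := leq_card h h_inj; rewrite !card_ord.
Qed.

Lemma has_index_uniq L k k' : (forall x y, L x -> L y -> L (x - y)) ->
  has_index L k -> has_index L k' -> k = k'.
Proof.
by move=> Lsub Hk Hk'; apply/eqP; rewrite eqn_leq !(has_index_leq Lsub).
Qed.

End SubgroupIndex.

Section LatticeIndex.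
Variable d : nat.

Definition in_lattice (Y : 'M[int]_d) (v : 'cV[int]_d) := exists c, v = Y *m c.

Lemma in_latticeB Y x y : in_lattice Y x -> in_lattice Y y -> in_lattice Y (x - y).
Proof. by move=> [c ->] [c' ->]; exists (c - c'); rewrite mulmxBr. Qed.

Lemma has_index_lattice_unit_mul (L R D : 'M[int]_d) k :
  L \in unitmx -> R \in unitmx -> has_index (in_lattice D) k ->
  has_index (in_lattice (L *m D *m R)) k.
Proof.
move=> uL uR [f [f_inj f_cover]]; exists (fun a => L *m f a); split.
  move=> a b [c Hc]; apply: f_inj; exists (R *m c).
  move/(congr1 (mulmx (invmx L))): Hc.
  by rewrite -mulmxBr !mulmxA mulVmx // !mul1mx => ->.
move=> v; have [a [c Hc]] := f_cover (invmx L *m v); exists a.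
exists (invmx R *m c).
by rewrite -!mulmxA mulKVmx // -[v](mulKVmx uL) -mulmxBr Hc.
Qed.

Section Diagonal.
Variable D : 'M[int]_d.
Hypothesis D_diag : is_diag_mx D.
Hypothesis D_neq0 : forall i, D i i != 0.

Lemma in_lattice_diagP v : in_lattice D v <-> forall i, (D i i %| v i ord0)%Z.
Proof.
have Dij i j : j != i -> D i j = 0.
  by move=> ji; apply/(is_diag_mxP D_diag); rewrite eq_sym.
split.
  move=> [c ->] i; rewrite mxE (bigD1 i) //= big1 ?addr0 ?dvdz_mulr //.
  by move=> j /Dij ->; rewrite mul0r.
move=> Hv; exists (\col_i ((v i ord0) %/ D i i)%Z).
apply/matrixP=> i j; rewrite (ord1 j) mxE (bigD1 i) //= big1 ?addr0.
  by rewrite mxE mulrC divzK.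
by move=> j' /Dij ->; rewrite mul0r.
Qed.

(* Representatives of Z^d / D Z^d: vectors whose i-th entry lies in [0, |D i i|). *)
Let box := {dffun forall i : 'I_d, 'I_`|D i i|}.

Let box_vec (t : box) : 'cV[int]_d := \col_i ((t i : nat)%:Z).

Lemma has_index_lattice_diag : has_index (in_lattice D) (\prod_i `|D i i|)%N.
Proof.
have -> : (\prod_i `|D i i|)%N = #|{: box}|.
  rewrite card_dep_ffun foldrE big_image /=.
  by apply: eq_bigr => i _; rewrite card_ord.
exists (fun a => box_vec (enum_val a)); split.
  move=> a b /in_lattice_diagP Hab; apply: enum_val_inj; apply/ffunP => i.
  have := Hab i; rewrite !mxE dvdzE => Hdvd; apply/val_inj => /=.
  move: Hdvd (ltn_ord (enum_val a i)) (ltn_ord (enum_val b i)).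
  set p := nat_of_ord _; set q := nat_of_ord _ => Hdvd ltp ltq.
  have [E|nz] := eqVneq `|(p%:Z - q%:Z)%R|%N 0%N; first by lia.
  by have := dvdn_leq _ Hdvd; rewrite lt0n nz => /(_ isT); lia.
move=> v.
have mod_lt i : (`|(v i ord0 %% D i i)%Z|%N < `|D i i|)%N.
  by have := ltz_mod (v i ord0) (D_neq0 i); have := modz_ge0 (v i ord0) (D_neq0 i); lia.
pose t : box := [ffun i => Ordinal (mod_lt i)].
exists (enum_rank t); rewrite enum_rankK; apply/in_lattice_diagP => i.
rewrite !mxE ffunE /= gez0_abs ?modz_ge0 //.
by rewrite {1}(divz_eq (v i ord0) (D i i)) addrK dvdz_mull.
Qed.

End Diagonal.

Lemma has_index_lattice_det (Y : 'M[int]_d) :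
  \det Y != 0 -> has_index (in_lattice Y) `|\det Y|%N.
Proof.
move=> detY; have [L uL [R uR [s _ defY]]] := int_Smith_normal_form Y.
set D := \matrix_(i, j) _ in defY.
have D_diag : is_diag_mx D.
  by apply/is_diag_mxP => i j /negPf ij; rewrite mxE ij.
have detYE : \det Y = \det L * \prod_i D i i * \det R.
  by rewrite defY !det_mulmx (det_trig (is_diag_mx_is_trig D_diag)).
have D_neq0 i : D i i != 0.
  by apply: contra detY => /eqP Di; rewrite detYE (bigD1 i) //= Di !(mul0r, mulr0).
have unit_abs (M : 'M[int]_d) : M \in unitmx -> `|\det M|%N = 1%N.
  by rewrite unitmxE => /orP[] /eqP ->.
rewrite detYE !abszM (big_morph absz abszM (erefl : `|1|%N = 1%N)).
rewrite unit_abs // unit_abs // mul1n muln1 defY.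
exact/has_index_lattice_unit_mul/has_index_lattice_diag.
Qed.

End LatticeIndex.

Section ExtendAlong.
Variables (aT : finType) (rT : eqType) (f : aT -> rT).

Definition extend_along (T : Type) (g : aT -> T) (x0 : T) (y : rT) : T :=
  if [pick x | f x == y] is Some x then g x else x0.

Lemma preimage_cases y : (exists x, y = f x) \/ (forall x, f x != y).
Proof.
case: (pickP (fun x => f x == y)) => [x /eqP <-|fy]; first by left; exists x.
by right => x; rewrite fy.
Qed.

Lemma extend_along_out T g (x0 : T) y : (forall x, f x != y) -> extend_along g x0 y = x0.
Proof.
by move=> fy; rewrite /extend_along; case: pickP => // x; rewrite (negbTE (fy x)).
Qed.

Hypothesis f_inj : injective f.

Lemma extend_alongE T g (x0 : T) x : extend_along g x0 (f x) = g x.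
Proof.
rewrite /extend_along; case: pickP => [x' /eqP /f_inj -> //|].
by move/(_ x); rewrite eqxx.
Qed.

End ExtendAlong.

Section ColumnBasis.
Variables (d N : nat) (phi : 'I_d -> 'I_N).
Hypothesis phi_inj : injective phi.

Definition col_set : {set 'I_N} := [set phi t | t in setT].

Lemma sum_col_set (R : comNzRingType) (M : 'M[R]_(d, N)) (c : 'I_N -> R) :
  \sum_(e in col_set) c e *: col e M = colsub phi M *m \col_t c (phi t).
Proof.
rewrite big_imset /=; last by move=> x y _ _; apply: phi_inj.
apply/matrixP => i j; rewrite summxE !mxE.
rewrite (eq_bigl (fun _ => true)); last by move=> t; rewrite in_setT.
by apply: eq_bigr => t _; rewrite !mxE mulrC.
Qed.

Lemma col_extend_along (R : comNzRingType) (c : 'cV[R]_d) :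
  \col_t extend_along phi (fun t => c t ord0) 0 (phi t) = c.
Proof. by apply/matrixP => i j; rewrite (ord1 j) mxE (extend_alongE phi_inj). Qed.

Lemma in_int_span_col_setP (X : 'M[int]_(d, N)) v :
  in_int_span X col_set v <-> in_lattice (colsub phi X) v.
Proof.
rewrite /in_int_span; split => [[c ->]|[c ->]].
  by rewrite sum_col_set; exists (\col_t c (phi t)).
by exists (extend_along phi (fun t => c t ord0) 0); rewrite sum_col_set col_extend_along.
Qed.

Lemma in_real_span_col_set (X : 'M[int]_(d, N)) v :
  \det (colsub phi X) != 0 -> in_real_span X col_set v.
Proof.
move=> detX; have uX : toR (colsub phi X) \in unitmx.
  by rewrite unitmxE unitfE det_map_mx intr_eq0.
pose c := invmx (toR (colsub phi X)) *m toR v.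
exists (extend_along phi (fun t => c t ord0) 0).
by rewrite sum_col_set col_extend_along -map_mxsub mulKVmx.
Qed.

Lemma arank_col_set (X : 'M[int]_(d, N)) :
  arank X col_set = \rank (toR (colsub phi X)).
Proof.
pose embed : 'M[int]_(d, N) := \matrix_(t, j) (phi t == j)%:R.
rewrite /arank.
have -> : \matrix_(i, j) (if j \in col_set then X i j else 0) = colsub phi X *m embed.
  apply/matrixP => i j; rewrite !mxE.
  case: ifP => [/imsetP [t _ ->]|j_out].
    rewrite (bigD1 t) //= !mxE eqxx mulr1 big1 ?addr0 // => t' t't.
    by rewrite !mxE (inj_eq phi_inj) (negbTE t't) mulr0.
  rewrite big1 // => t _; rewrite !mxE; case: eqP => [tj|]; last by rewrite mulr0.
  by move: j_out; rewrite -tj imset_f ?in_setT.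
rewrite /toR map_mxM mxrankMfree //.
apply/row_freeP; exists (map_mx intr embed)^T.
apply/matrixP => t t'; rewrite !mxE (bigD1 (phi t)) //= !mxE eqxx big1 ?addr0.
  by rewrite (inj_eq phi_inj) eq_sym; case: eqP; rewrite ?mulr1 ?mulr0.
by move=> j jt; rewrite !mxE eq_sym (negbTE jt) mul0r.
Qed.

Lemma arank_col_set_full (X : 'M[int]_(d, N)) :
  (arank X col_set == d) = (\det (colsub phi X) != 0).
Proof.
rewrite arank_col_set -[_ == d]/(row_free _) row_free_unit unitmxE unitfE.
by rewrite det_map_mx intr_eq0.
Qed.

Lemma amult_col_setP (X : 'M[int]_(d, N)) k : \det (colsub phi X) != 0 ->
  amult_is X col_set k <-> has_index (in_lattice (colsub phi X)) k.
Proof.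
move=> detX; split.
  move=> [f [_ f_inj f_cover]]; exists f; split.
    by move=> a b /in_int_span_col_setP /f_inj.
  move=> v; have [a Ha] := f_cover v (in_real_span_col_set v detX).
  by exists a; apply/in_int_span_col_setP.
move=> [f [f_inj f_cover]]; exists f; split.
- by move=> a; exact: in_real_span_col_set.
- by move=> a b /in_int_span_col_setP /f_inj.
- by move=> v _; have [a Ha] := f_cover v; exists a; apply/in_int_span_col_setP.
Qed.

Lemma same_arith_matroid_abs_det (X X' : 'M[int]_(d, N)) :
  same_arith_matroid X X' -> `|\det (colsub phi X)|%N = `|\det (colsub phi X')|%N.
Proof.
move=> /(_ col_set) [rkXX' mXX'].
have [detX0|detX] := eqVneq (\det (colsub phi X)) 0.
  have /eqP -> : \det (colsub phi X') == 0.
    by rewrite -[_ == 0]negbK -arank_col_set_full -rkXX' arank_col_set_full detX0 eqxx.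
  by rewrite detX0.
have detX' : \det (colsub phi X') != 0.
  by rewrite -arank_col_set_full -rkXX' arank_col_set_full.
have /(amult_col_setP _ detX') idxX : amult_is X' col_set `|\det (colsub phi X)|%N.
  by apply/mXX'/(amult_col_setP _ detX)/has_index_lattice_det.
exact: has_index_uniq (@in_latticeB _ _) idxX (has_index_lattice_det detX').
Qed.

End ColumnBasis.

Definition sign_mx {R : pzRingType} {n} (s : 'I_n -> bool) : 'M[R]_n :=
  diag_mx (\row_j (-1) ^+ s j).

Lemma sign_mxK {R : comPzRingType} {n} (s : 'I_n -> bool) :
  sign_mx s *m sign_mx s = 1%:M :> 'M[R]_n.
Proof.
rewrite mulmx_diag -diag_const_mx; congr diag_mx; apply/rowP => j.
by rewrite !mxE -signr_addb addbb.
Qed.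

Lemma toR_sign_mx n (s : 'I_n -> bool) : toR (sign_mx s) = sign_mx s.
Proof. by apply/matrixP => i j; rewrite !mxE rmorphMn rmorphXn rmorphN1. Qed.

Lemma toR_mul m n p (X : 'M[int]_(m, n)) (Y : 'M[int]_(n, p)) :
  toR (X *m Y) = toR X *m toR Y.
Proof. exact: map_mxM. Qed.

Section SignScale.
Variables (R : comNzRingType) (m n : nat) (a : 'I_m -> bool) (e : 'I_n -> bool).

Lemma sum_col_sign_scale (U : 'M[R]_m) (M : 'M[R]_(m, n)) (S : {set 'I_n})
    (c : 'I_n -> R) :
  \sum_(j in S) c j *: col j (U *m M *m sign_mx e) =
  U *m \sum_(j in S) (c j * (-1) ^+ e j) *: col j M.
Proof.
rewrite mulmx_sumr; apply: eq_bigr => j _.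
rewrite -scalemxAr -scalerA; congr (_ *: _).
apply/colP => i; rewrite !mxE (bigD1 j) //= big1 ?addr0.
  by rewrite !mxE eqxx mulr1n mulrC; congr (_ * _); apply: eq_bigr => k _; rewrite mxE.
by move=> k kj; rewrite !mxE (negbTE kj) mulr0n mulr0.
Qed.

Lemma span_sign_scale (M : 'M[R]_(m, n)) (S : {set 'I_n}) v :
  (exists c, v = \sum_(j in S) c j *: col j (sign_mx a *m M *m sign_mx e)) <->
  (exists c, sign_mx a *m v = \sum_(j in S) c j *: col j M).
Proof.
split=> [[c ->]|[c Hc]]; exists (fun j => c j * (-1) ^+ e j).
  by rewrite sum_col_sign_scale mulmxA sign_mxK mul1mx.
rewrite sum_col_sign_scale -[v]mul1mx -(sign_mxK a) -mulmxA Hc.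
by congr (_ *m _); apply: eq_bigr => j _; rewrite -mulrA -signr_addb addbb mulr1.
Qed.

End SignScale.

Section SignScaleMatroid.
Variables (d N : nat) (a : 'I_d -> bool) (e : 'I_N -> bool).

Let sign_scale (X : 'M[int]_(d, N)) := sign_mx a *m X *m sign_mx e.

Lemma sign_scaleK : involutive sign_scale.
Proof.
by move=> X; rewrite /sign_scale !mulmxA sign_mxK mul1mx -!mulmxA sign_mxK mulmx1.
Qed.

Lemma in_int_span_sign_scale X S v :
  in_int_span (sign_scale X) S v <-> in_int_span X S (sign_mx a *m v).
Proof. exact: span_sign_scale. Qed.

Lemma in_real_span_sign_scale X S v :
  in_real_span (sign_scale X) S v <-> in_real_span X S (sign_mx a *m v).
Proof.
by rewrite /in_real_span /sign_scale !toR_mul !toR_sign_mx; apply: span_sign_scale.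
Qed.

Lemma amult_sign_scale X S k : amult_is X S k -> amult_is (sign_scale X) S k.
Proof.
have aK v : sign_mx a *m (sign_mx a *m v) = v :> 'cV[int]_d.
  by rewrite mulmxA sign_mxK mul1mx.
move=> [f [f_span f_inj f_cover]]; exists (fun i => sign_mx a *m f i); split.
- by move=> i; apply/in_real_span_sign_scale; rewrite aK.
- by move=> i j /in_int_span_sign_scale; rewrite mulmxBr !aK; apply: f_inj.
- move=> v /in_real_span_sign_scale /f_cover [i Hi]; exists i.
  by apply/in_int_span_sign_scale; rewrite mulmxBr aK.
Qed.

Lemma arank_sign_scale X S : arank (sign_scale X) S = arank X S.
Proof.
have sign_free n (s : 'I_n -> bool) : row_free (sign_mx s : 'M[R]_n).
  by apply/row_freeP; exists (sign_mx s); rewrite sign_mxK.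
rewrite /arank.
have -> : \matrix_(i, j) (if j \in S then sign_scale X i j else 0) =
          sign_scale (\matrix_(i, j) (if j \in S then X i j else 0)).
  apply/matrixP => i j; rewrite /sign_scale !mul_mx_diag !mul_diag_mx !mxE.
  by case: (j \in S); rewrite ?mulr0 ?mul0r.
rewrite /sign_scale !toR_mul !toR_sign_mx (mxrankMfree _ (sign_free _ e)).
by rewrite eqmxMfull // row_full_unit -row_free_unit sign_free.
Qed.

Lemma same_arith_matroid_sign_scale X : same_arith_matroid (sign_scale X) X.
Proof.
move=> S; split; first exact: arank_sign_scale.
move=> k; split; last exact: amult_sign_scale.
by move/amult_sign_scale; rewrite sign_scaleK.
Qed.

End SignScaleMatroid.

Lemma neq_abs_eq_opp (x y : int) : `|x|%N = `|y|%N -> x != y -> x != 0 /\ y = - x.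
Proof. by move=> ? /eqP ?; split; [apply/eqP|]; lia. Qed.

Section BasicForm.
Variables (d n : nat) (B : 'M[int]_d).
Hypothesis B_diag : is_diag_mx B.

Let B_offdiag i j : i != j -> B i j = 0.
Proof. by move=> ij; apply/(is_diag_mxP B_diag). Qed.

Definition swap_col (i0 : 'I_d) (j0 : 'I_n) (t : 'I_d) : 'I_(d + n) :=
  if t == i0 then rshift d j0 else lshift n t.

Lemma swap_col_inj i0 j0 : injective (swap_col i0 j0).
Proof.
move=> t t'; rewrite /swap_col.
case: eqP => [->|_]; case: eqP => [->|_] //.
- by move=> /eqP; rewrite eq_sym eq_lrshift.
- by move=> /eqP; rewrite eq_lrshift.
- exact: lshift_inj.
Qed.

Lemma det_swap_col (A : 'M[int]_(d, n)) i0 j0 :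
  \det (colsub (swap_col i0 j0) (row_mx B A)) = \prod_(t | t != i0) B t t * A i0 j0.
Proof.
rewrite /determinant (bigD1 1%g) //= [X in _ + X]big1 ?addr0 => [|s s1].
  rewrite odd_perm1 mul1r (bigD1 i0) //= perm1 mxE /swap_col eqxx row_mxEr mulrC.
  by congr (_ * _); apply: eq_bigr => t ti0; rewrite perm1 mxE (negbTE ti0) row_mxEl.
have [i si] : exists i, s i != i.
  apply/existsP; apply: contraR s1 => /existsPn s_id.
  by apply/eqP/permP => i; rewrite perm1; apply/eqP/negPn.
suff [t st0 st] : exists2 t, s t != i0 & s t != t.
  rewrite (bigD1 t) //= mxE /swap_col (negbTE st0) row_mxEl B_offdiag 1?eq_sym //.
  by rewrite mul0r mulr0.
have [si0|] := eqVneq (s i) i0; last by exists i.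
by exists i0; rewrite -[X in _ != X]si0 (inj_eq perm_inj) -[X in X != _]si0.
Qed.

Section Cycle.
Variables (k' : nat) (r : 'I_k'.+2 -> 'I_d) (c : 'I_k'.+2 -> 'I_n).
Hypotheses (r_inj : injective r) (c_inj : injective c).

(* The basis replaces column [r u] of [B] by column [c u] of [A]. *)
Definition cycle_col (t : 'I_d) : 'I_(d + n) :=
  extend_along r (fun u => rshift d (c u)) (lshift n t) t.

Lemma cycle_col_inj : injective cycle_col.
Proof.
move=> t1 t2; rewrite /cycle_col.
case: (preimage_cases r t1) => [[u1 ->]|H1]; case: (preimage_cases r t2) => [[u2 ->]|H2].
- by rewrite !(extend_alongE r_inj) => /rshift_inj /c_inj ->.
- by rewrite (extend_alongE r_inj) extend_along_out // => /eqP; rewrite eq_sym eq_lrshift.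
- by rewrite (extend_alongE r_inj) extend_along_out // => /eqP; rewrite eq_lrshift.
- by rewrite !extend_along_out // => /lshift_inj.
Qed.

Definition cycle_shift (t : 'I_d) : 'I_d := extend_along r (fun u => r (u - 1)) t t.

Lemma cycle_shift_inj : injective cycle_shift.
Proof.
move=> t1 t2; rewrite /cycle_shift.
case: (preimage_cases r t1) => [[u1 ->]|H1]; case: (preimage_cases r t2) => [[u2 ->]|H2].
- by rewrite !(extend_alongE r_inj) => /r_inj /addIr ->.
- rewrite (extend_alongE r_inj) extend_along_out // => E.
  by have := H2 (u1 - 1); rewrite E eqxx.
- rewrite (extend_alongE r_inj) extend_along_out // => E.
  by have := H1 (u2 - 1); rewrite E eqxx.
- by rewrite !extend_along_out.
Qed.

Definition cycle_perm : 'S_d := perm cycle_shift_inj.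

Lemma cycle_perm_in u : cycle_perm (r u) = r (u - 1).
Proof. by rewrite permE /cycle_shift (extend_alongE r_inj). Qed.

Lemma cycle_perm_out t : (forall u, r u != t) -> cycle_perm t = t.
Proof. by move=> Ht; rewrite permE /cycle_shift extend_along_out. Qed.

Lemma cycle_perm_neq1 : cycle_perm != 1%g.
Proof.
apply/eqP => /permP /(_ (r 0)); rewrite cycle_perm_in perm1 => /r_inj /eqP.
by rewrite add0r eqr_oppLR oppr0 oner_eq0.
Qed.

Definition cycle_supported (A : 'M[int]_(d, n)) :=
  forall t u, A (r t) (c u) != 0 -> u = t \/ u = t + 1.

Definition leibniz_term (M : 'M[int]_d) (s : 'S_d) := (-1) ^+ s * \prod_t M (s t) t.

Section Supported.
Variable A : 'M[int]_(d, n).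
Hypothesis A_cycle : cycle_supported A.

Let M := colsub cycle_col (row_mx B A).

(* Each [r u] is sent to [r u] or [r (u - 1)], and one fixed point propagates around
   the cycle. *)
Lemma cycle_perm_support (s : 'S_d) :
  \prod_t M (s t) t != 0 -> s = 1%g \/ s = cycle_perm.
Proof.
move=> /prodf_neq0 Ms; have {}Ms t : M (s t) t != 0 by exact: Ms.
have s_out t : (forall u, r u != t) -> s t = t.
  move=> Ht; have := Ms t; rewrite mxE /cycle_col extend_along_out // row_mxEl.
  by apply: contraNeq => /B_offdiag ->.
have s_in u : s (r u) = r u \/ s (r u) = r (u - 1).
  have [[u' su]|su] := preimage_cases r (s (r u)).
    have := Ms (r u); rewrite mxE /cycle_col (extend_alongE r_inj) row_mxEr su.
    by case/A_cycle=> ->; [left | right; rewrite addrK].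
  by left; apply/perm_inj/s_out.
have [u0 /eqP su0|s_moves] := pickP (fun u => s (r u) == r u); [left | right].
  have s_fix m : s (r (u0 + m%:R)) = r (u0 + m%:R).
    elim: m => [|m IHm]; first by rewrite addr0.
    rewrite -natr1 addrA; case: (s_in (u0 + m%:R + 1)) => // /eqP.
    rewrite addrK -IHm (inj_eq perm_inj) (inj_eq r_inj) -subr_eq0.
    by rewrite [_ + 1]addrC addrK oner_eq0.
  apply/permP => t; rewrite perm1.
  case: (preimage_cases r t) => [[u ->]|Ht]; last exact: s_out.
  by have := s_fix (u - u0); rewrite natr_Zp addrC subrK.
apply/permP => t; case: (preimage_cases r t) => [[u ->]|Ht].
  by rewrite cycle_perm_in; case: (s_in u) => //; move/eqP; rewrite s_moves.
by rewrite cycle_perm_out ?s_out.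
Qed.

Lemma det_cycle_col : \det M = leibniz_term M 1 + leibniz_term M cycle_perm.
Proof.
rewrite -det_tr /determinant (bigD1 1%g) //= (bigD1 cycle_perm) ?cycle_perm_neq1 //=.
rewrite [X in _ + (_ + X)]big1 ?addr0 => [|s /andP [s1 s_cyc]].
  by congr (_ * _ + _ * _); apply: eq_bigr => t _; rewrite mxE.
under eq_bigr do rewrite mxE.
have [->|/cycle_perm_support] := eqVneq (\prod_t M (s t) t) 0; first by rewrite mulr0.
by case=> E; [move: s1 | move: s_cyc]; rewrite E eqxx.
Qed.

End Supported.

Hypothesis B_neq0 : forall i, B i i != 0.

(* The determinants are x + y and x - y, with x and y the nonzero Leibniz terms of 1 and
   [cycle_perm]: only the latter contains the flipped entry. *)
Lemma abs_det_cycle_col_flip (A1 A2 : 'M[int]_(d, n)) :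
  cycle_supported A1 -> cycle_supported A2 ->
  (forall u, A1 (r u) (c u) != 0) -> (forall u, A1 (r (u - 1)) (c u) != 0) ->
  (forall u, A2 (r u) (c u) = A1 (r u) (c u)) ->
  (forall u, u != 0 -> A2 (r (u - 1)) (c u) = A1 (r (u - 1)) (c u)) ->
  A2 (r (0 - 1)) (c 0) = - A1 (r (0 - 1)) (c 0) ->
  `|\det (colsub cycle_col (row_mx B A1))|%N != `|\det (colsub cycle_col (row_mx B A2))|%N.
Proof.
move=> A1_cycle A2_cycle A1_diag A1_sub A2_diag A2_sub A2_flip.
rewrite (det_cycle_col A1_cycle) (det_cycle_col A2_cycle).
set M1 := colsub _ (row_mx B A1); set M2 := colsub _ (row_mx B A2).
have M_out (A : 'M[int]_(d, n)) t : (forall u, r u != t) ->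
    colsub cycle_col (row_mx B A) (cycle_perm t) t = B t t.
  by move=> Ht; rewrite mxE cycle_perm_out // /cycle_col extend_along_out // row_mxEl.
have M_in (A : 'M[int]_(d, n)) s u : colsub cycle_col (row_mx B A) s (r u) = A s (c u).
  by rewrite mxE /cycle_col (extend_alongE r_inj) row_mxEr.
have M_id (A : 'M[int]_(d, n)) t : (forall u, r u != t) ->
    colsub cycle_col (row_mx B A) t t = B t t.
  by move=> Ht; rewrite mxE /cycle_col extend_along_out // row_mxEl.
have term1 : leibniz_term M2 1 = leibniz_term M1 1.
  congr (_ * _); apply: eq_bigr => t _; rewrite perm1.
  by case: (preimage_cases r t) => [[u ->]|Ht]; rewrite ?M_in ?A2_diag // !M_id.
have term_cyc : leibniz_term M2 cycle_perm = - leibniz_term M1 cycle_perm.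
  rewrite /leibniz_term -mulrN (bigD1 (r 0)) //= [in RHS](bigD1 (r 0)) //= -mulNr.
  congr (_ * (_ * _)); first by rewrite cycle_perm_in !M_in A2_flip.
  apply: eq_bigr => t /negPf t0; case: (preimage_cases r t) => [[u tu]|Ht].
    rewrite tu cycle_perm_in !M_in A2_sub //.
    by apply: contraFneq t0 => u0; rewrite tu u0.
  by rewrite !M_out.
have term1_neq0 : leibniz_term M1 1 != 0.
  rewrite mulf_neq0 ?signr_eq0 //; apply/prodf_neq0 => t _; rewrite perm1.
  by case: (preimage_cases r t) => [[u ->]|Ht]; rewrite ?M_in ?M_id.
have term_cyc_neq0 : leibniz_term M1 cycle_perm != 0.
  rewrite mulf_neq0 ?signr_eq0 //; apply/prodf_neq0 => t _.
  by case: (preimage_cases r t) => [[u ->]|Ht]; rewrite ?cycle_perm_in ?M_in ?M_out.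
rewrite term1 term_cyc.
move: term1_neq0 term_cyc_neq0; set x := leibniz_term M1 1; set y := leibniz_term M1 _.
by move=> /eqP x0 /eqP y0; apply/eqP; lia.
Qed.

Lemma abs_det_cycle_col_neq (A1 A2 : 'M[int]_(d, n)) :
  (forall i j, `|A1 i j|%N = `|A2 i j|%N) ->
  let E := support_entries A1 in let Dl := [set p | A1 p.1 p.2 != A2 p.1 p.2] in
  (forall t u, (r t, c u) \in E -> u = t \/ u = t + 1) ->
  (forall u, (r u, c u) \in E :\: Dl) ->
  (forall u, u != 0 -> (r (u - 1), c u) \in E :\: Dl) ->
  (r (0 - 1), c 0) \in Dl ->
  `|\det (colsub cycle_col (row_mx B A1))|%N != `|\det (colsub cycle_col (row_mx B A2))|%N.
Proof.
move=> abs12 E Dl chordless edge edge_pred closing.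
have supp12 i j : (A2 i j != 0) = (A1 i j != 0) by rewrite -!absz_eq0 abs12.
have agree x y : (x, y) \in E :\: Dl -> A2 x y = A1 x y.
  by rewrite !inE negbK => /andP [/eqP -> _].
have nz x y : (x, y) \in E :\: Dl -> A1 x y != 0 by rewrite !inE => /andP[].
move: closing; rewrite inE /= => /(neq_abs_eq_opp (abs12 _ _)) [A1_closing_neq0 A2_closing].
apply: abs_det_cycle_col_flip => [t u|t u|u|u|u|u u0|].
- by move=> A1tu; apply: chordless; rewrite inE.
- by rewrite supp12 => A1tu; apply: chordless; rewrite inE.
- exact/nz/edge.
- have [->|u0] := eqVneq u 0; last exact/nz/edge_pred.
  exact: A1_closing_neq0.
- exact/agree/edge.
- exact/agree/edge_pred.
- exact: A2_closing.
Qed.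

End Cycle.
End BasicForm.

Section Forest.
Variables d n : nat.

Lemma bip_adj_sym (E : {set 'I_d * 'I_n}) : symmetric (bip_adj E).
Proof. by move=> [x|x] [y|y]. Qed.

Lemma sub_bip_adj (E E' : {set 'I_d * 'I_n}) :
  E \subset E' -> subrel (bip_adj E) (bip_adj E').
Proof. by move=> /subsetP EE' [x|x] [y|y] //= /EE'. Qed.

Lemma has_cycle_connect (P : {set 'I_d * 'I_n}) i j :
  (i, j) \in P -> connect (bip_adj (P :\ (i, j))) (inr j) (inl i) -> has_cycle P.
Proof.
move=> ijP /connectP [s s_path s_last].
case: (shortenP s_path) s_last => s' s'_path s'_uniq _ s'_last.
exists (inr j :: s'); split => //.
- case: s' s'_path s'_uniq s'_last => [|x [|y s']] //= /andP[jx _] _ xi.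
  by move: jx; rewrite -xi /= !inE eqxx.
- rewrite /= rcons_path -s'_last /= ijP andbT.
  by apply: sub_path s'_path; apply/sub_bip_adj/subD1set.
Qed.

(* Remove an edge, label by induction, and flip the labels of the component of one of
   its endpoints, which does not contain the other one. *)
Lemma forest_edge_potential (P : {set 'I_d * 'I_n}) (tau : 'I_d * 'I_n -> bool) :
  ~ has_cycle P ->
  exists (al : 'I_d -> bool) (be : 'I_n -> bool),
    forall p, p \in P -> al p.1 (+) be p.2 = tau p.
Proof.
elim: {P}_.+1 {-2}P (ltnSn #|P|) => // m IHm P; rewrite ltnS => P_le P_forest.
have [P0|[[i j] ijP]] := set_0Vmem P.
  by exists (fun=> false), (fun=> false) => p; rewrite P0 inE.
set P' := P :\ (i, j).
have P'_forest : ~ has_cycle P'.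
  move=> [s [s_size s_uniq s_cycle]]; apply: P_forest; exists s; split => //.
  by apply: sub_cycle s_cycle; apply/sub_bip_adj/subD1set.
have P'_le : (#|P'| < m)%N by move: P_le; rewrite (cardsD1 (i, j)) ijP.
have [al [be Hab]] := IHm P' P'_le P'_forest.
set C := connect (bip_adj P') (inr j).
have Ci : ~~ C (inl i) by apply/negP => /(has_cycle_connect ijP).
set flip := tau (i, j) (+) al i (+) be j.
exists (fun x => al x (+) (flip && C (inl x))), (fun y => be y (+) (flip && C (inr y))).
move=> [x y] /= xyP.
have [[-> ->]|xy_ij] := eqVneq (x, y) (i, j).
  rewrite (negbTE Ci) /C connect0 andbF andbT addbF /flip.
  by case: (al i); case: (be j); case: (tau (i, j)).
have xyP' : (x, y) \in P' by rewrite !inE xy_ij.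
have -> : C (inl x) = C (inr y).
  by apply/idP/idP => Cxy; apply: connect_trans Cxy (connect1 _).
rewrite -(Hab _ xyP') /=.
by case: (al x); case: (be y); case: (flip && C (inr y)).
Qed.

End Forest.

Lemma ex_minimal_nat (Q : nat -> Prop) m0 :
  Q m0 -> exists m, Q m /\ forall m', Q m' -> (m <= m')%N.
Proof.
elim: m0 {-2}m0 (leqnn m0) => [|m0 IHm0] m le_m Qm.
  by exists m; split => // m'; lia.
have [[m' [lt_m' Qm']]|no_smaller] := classic (exists m', (m' < m)%N /\ Q m').
  by apply: (IHm0 m') => //; lia.
exists m; split => // m' Qm'; rewrite leqNgt; apply/negP => lt_m'.
by apply: no_smaller; exists m'.
Qed.

Lemma val_Zp_add1 k (u : 'I_k.+2) : nat_of_ord (u + 1) = (u.+1 %% k.+2)%N.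
Proof. by rewrite (@add_Zp_1 k.+2 u). Qed.

Lemma val_Zp_sub1 k (u : 'I_k.+2) : nat_of_ord (u - 1) = ((u + k.+1) %% k.+2)%N.
Proof. by rewrite (@sub_Zp_1 k.+2 u) /= addnS. Qed.

Section Walk.
Variables (T : Type) (e : rel T).

(* Walks are indexed by [nat], so that cutting and gluing them is index arithmetic. *)
Definition walk (m : nat) (x y : T) := exists v : nat -> T,
  [/\ v 0%N = x, v m = y & forall a, (a < m)%N -> e (v a) (v a.+1)].

Lemma walk1 x y : e x y -> walk 1 x y.
Proof.
move=> xy; exists (fun a => if a == 0%N then x else y); split => // a.
by rewrite ltnS leqn0 => /eqP ->.
Qed.

Lemma walk_cat m1 m2 x y z : walk m1 x y -> walk m2 y z -> walk (m1 + m2) x z.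
Proof.
move=> [v1 [v10 v1m H1]] [v2 [v20 v2m H2]].
exists (fun a => if (a <= m1)%N then v1 a else v2 (a - m1)%N); split.
- by rewrite leq0n.
- case: ifP => [le_m|_]; last by rewrite addKn.
  have m2_0 : m2 = 0%N by lia.
  by rewrite m2_0 addn0 v1m -v20 -v2m m2_0.
- move=> a lt_a; case: ifP => le1; case: ifP => le2.
  + by apply: H1; lia.
  + have -> : a = m1 by lia.
    by rewrite v1m -v20 subSnn; apply: H2; lia.
  + by lia.
  + by rewrite subSn; [apply: H2 | ]; lia.
Qed.

Lemma walk_rev m x y : symmetric e -> walk m x y -> walk m y x.
Proof.
move=> e_sym [v [v0 vm Hv]]; exists (fun a => v (m - a)%N); split.
- by rewrite subn0.
- by rewrite subnn.
- by move=> a lt_a; rewrite e_sym -(subnSK lt_a); apply: Hv; lia.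
Qed.

Lemma subwalk m (v : nat -> T) a b :
  (forall t, (t < m)%N -> e (v t) (v t.+1)) -> (a <= b <= m)%N ->
  walk (b - a) (v a) (v b).
Proof.
move=> Hv /andP[le_ab le_bm]; exists (fun t => v (a + t)%N); split.
- by rewrite addn0.
- by rewrite subnKC.
- by move=> t lt_t; rewrite addnS; apply: Hv; lia.
Qed.

Lemma walk_path x s : path e x s -> walk (size s) x (last x s).
Proof.
move=> /pathP x_s; exists (nth x (x :: s)); split => //; last exact: x_s.
by rewrite (last_nth x).
Qed.

End Walk.

Lemma sub_walk (T : Type) (e e' : rel T) m x y :
  subrel e e' -> walk e m x y -> walk e' m x y.
Proof. by move=> ee' [v [v0 vm Hv]]; exists v; split => // a /Hv /ee'. Qed.

Section ChordlessCycle.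
Variables (d n : nat) (E Dl : {set 'I_d * 'I_n}).
Local Notation V := ('I_d + 'I_n)%type.
Local Notation F := (E :\: Dl).

Definition closing_walk m :=
  exists i j, (i, j) \in Dl /\ walk (bip_adj F) m (inr j) (inl i).

Lemma closing_walk_adj m x y : walk (bip_adj F) m x y -> bip_adj Dl x y -> closing_walk m.
Proof.
case: x => x; case: y => y //= xy_walk xy_Dl; last by exists y, x.
by exists x, y; split => //; apply: walk_rev xy_walk; apply: bip_adj_sym.
Qed.

Lemma bip_adj_F x y : bip_adj E x y -> ~~ bip_adj Dl x y -> bip_adj F x y.
Proof. by case: x => x; case: y => y //= xyE xyD; rewrite inE xyE xyD. Qed.

Definition is_row (x : V) := if x is inl _ then true else false.

Lemma bip_adj_is_row (X : {set 'I_d * 'I_n}) x y : bip_adj X x y -> is_row y = ~~ is_row x.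
Proof. by case: x; case: y. Qed.

Section MinimalClosingWalk.
Variables (i0 : 'I_d) (j0 : 'I_n) (m : nat) (v : nat -> V).
Hypotheses (ij0_Dl : (i0, j0) \in Dl) (v0 : v 0%N = inr j0) (vm : v m = inl i0).
Hypothesis v_walk : forall a, (a < m)%N -> bip_adj F (v a) (v a.+1).
Hypothesis m_min : forall m', closing_walk m' -> (m <= m')%N.

Lemma minimal_walk_is_row a : (a <= m)%N -> is_row (v a) = odd a.
Proof.
elim: a => [|a IHa] le_am; first by rewrite v0.
by rewrite (bip_adj_is_row (v_walk le_am)) IHa ?oddS //; lia.
Qed.

Lemma minimal_walk_odd : odd m.
Proof. by rewrite -minimal_walk_is_row // vm. Qed.

Lemma minimal_walk_gt1 : (1 < m)%N.
Proof.
have := minimal_walk_odd; case: m v_walk vm => [|[|//]] //= vw v1.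
by have := vw 0%N isT; rewrite v0 v1 /= inE ij0_Dl.
Qed.

(* Cutting out a detour, or closing through a chord, gives a shorter closing walk. *)
Lemma minimal_walk_inj a b : (a < b <= m)%N -> v a <> v b.
Proof.
move=> /andP[lt_ab le_bm] vab.
have w1 := subwalk v_walk (ltac:(lia) : (0 <= a <= m)%N).
have w2 := subwalk v_walk (ltac:(lia) : (b <= m <= m)%N).
rewrite -vab v0 vm subn0 in w1 w2.
suff /m_min : closing_walk (a + (m - b)) by lia.
by exists i0, j0; split => //; apply: walk_cat w1 w2.
Qed.

Lemma minimal_walk_chordless a b : (a.+1 < b <= m)%N -> (a != 0%N) || (b != m) ->
  ~~ bip_adj E (v a) (v b).
Proof.
move=> /andP[lt_ab le_bm] not_closing; apply/negP => abE.
have [abD|abF] := boolP (bip_adj Dl (v a) (v b)).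
  have w := subwalk v_walk (ltac:(lia) : (a <= b <= m)%N).
  by have /m_min := closing_walk_adj w abD; lia.
have w1 := subwalk v_walk (ltac:(lia) : (0 <= a <= m)%N).
have w2 := subwalk v_walk (ltac:(lia) : (b <= m <= m)%N).
have w := walk_cat (walk_cat w1 (walk1 (bip_adj_F abE abF))) w2.
rewrite v0 vm subn0 in w.
suff /m_min : closing_walk (a + 1 + (m - b)) by lia.
by exists i0, j0.
Qed.

Let k' := (m./2).-1.

Lemma minimal_walk_length : m = (k'.*2 + 3)%N.
Proof.
have := odd_double_half m; rewrite minimal_walk_odd /k'.
by have := minimal_walk_gt1; lia.
Qed.

Definition walk_row (t : 'I_k'.+2) : 'I_d := if v t.*2.+1 is inl i then i else i0.
Definition walk_col (t : 'I_k'.+2) : 'I_n := if v t.*2 is inr j then j else j0.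

Lemma walk_index_le (t : 'I_k'.+2) : (t.*2.+1 <= m)%N.
Proof. by have := ltn_ord t; rewrite minimal_walk_length; lia. Qed.

Lemma walk_rowE (t : 'I_k'.+2) : v t.*2.+1 = inl (walk_row t).
Proof.
have := minimal_walk_is_row (walk_index_le t); rewrite /walk_row oddS odd_double.
by case: (v _).
Qed.

Lemma walk_colE (t : 'I_k'.+2) : v t.*2 = inr (walk_col t).
Proof.
have := minimal_walk_is_row (ltnW (walk_index_le t)); rewrite /walk_col odd_double.
by case: (v _).
Qed.

Lemma walk_row_inj : injective walk_row.
Proof.
move=> t u tu; have le_t := walk_index_le t; have le_u := walk_index_le u.
apply/ord_inj/eqP; case: ltngtP => // lt; exfalso.
  by apply: (@minimal_walk_inj t.*2.+1 u.*2.+1); [lia | rewrite !walk_rowE tu].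
by apply: (@minimal_walk_inj u.*2.+1 t.*2.+1); [lia | rewrite !walk_rowE tu].
Qed.

Lemma walk_col_inj : injective walk_col.
Proof.
move=> t u tu; have le_t := walk_index_le t; have le_u := walk_index_le u.
apply/ord_inj/eqP; case: ltngtP => // lt; exfalso.
  by apply: (@minimal_walk_inj t.*2 u.*2); [lia | rewrite !walk_colE tu].
by apply: (@minimal_walk_inj u.*2 t.*2); [lia | rewrite !walk_colE tu].
Qed.

Lemma walk_cycle_chordless t u : (walk_row t, walk_col u) \in E -> u = t \/ u = t + 1.
Proof.
move=> tuE; have le_t := walk_index_le t; have le_u := walk_index_le u.
have [lt_ut|lt_tu|/ord_inj] := ltngtP u t; [right|right|by left]; apply/ord_inj.
  have [not_closing|] := boolP ((u.*2 != 0%N) || (t.*2.+1 != m)).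
    have /negP[] :=
      minimal_walk_chordless (ltac:(lia) : (u.*2.+1 < t.*2.+1 <= m)%N) not_closing.
    by rewrite walk_rowE walk_colE.
  rewrite negb_or !negbK minimal_walk_length => /andP[/eqP u0 /eqP tm].
  by rewrite val_Zp_add1 (_ : t.+1 = k'.+2) ?modnn //=; lia.
rewrite val_Zp_add1 modn_small /=; last by have := ltn_ord u; lia.
apply/eqP; rewrite eqn_leq lt_tu andbT leqNgt; apply/negP => lt_tu1.
have /negP[] := minimal_walk_chordless (ltac:(lia) : (t.*2.+2 < u.*2 <= m)%N) isT.
by rewrite walk_rowE walk_colE.
Qed.

Lemma walk_cycle_edge u : (walk_row u, walk_col u) \in F.
Proof. by have := v_walk (walk_index_le u); rewrite walk_colE walk_rowE. Qed.

Lemma walk_cycle_edge_pred u : u != 0 -> (walk_row (u - 1), walk_col u) \in F.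
Proof.
move=> u0; have u_pos : (0 < u)%N by rewrite lt0n.
have pred_u : nat_of_ord (u - 1) = u.-1.
  rewrite val_Zp_sub1 -{1}(prednK u_pos) addSnnS modnDr modn_small //.
  by have := ltn_ord u; lia.
have lt_m : (((u - 1)%R : 'I_k'.+2).*2.+1 < m)%N.
  by rewrite pred_u minimal_walk_length; have := ltn_ord u; lia.
have := v_walk lt_m.
by rewrite walk_rowE (_ : _.*2.+2 = u.*2)%N ?walk_colE // pred_u; lia.
Qed.

Lemma walk_cycle_closing : (walk_row (0 - 1), walk_col 0) \in Dl.
Proof.
have last_row : (((0 - 1)%R : 'I_k'.+2).*2.+1 = m)%N.
  by rewrite val_Zp_sub1 add0n modn_small // minimal_walk_length; lia.
have row_last : walk_row (0 - 1) = i0.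
  by have := walk_rowE (0 - 1); rewrite last_row vm => -[].
have col_first : walk_col 0 = j0.
  by have := walk_colE 0; rewrite /= v0 => -[].
by rewrite row_last col_first.
Qed.

End MinimalClosingWalk.

(* A shortest closing walk, closed up by its edge of [Dl], is a chordless cycle. *)
Lemma ex_chordless_cycle (P : {set 'I_d * 'I_n}) :
  P \subset F -> Dl \subset E ->
  (forall x y, connect (bip_adj P) x y = connect (bip_adj E) x y) -> Dl != set0 ->
  exists k' (r : 'I_k'.+2 -> 'I_d) (c : 'I_k'.+2 -> 'I_n),
    [/\ injective r, injective c, forall t u, (r t, c u) \in E -> u = t \/ u = t + 1
       & [/\ forall u, (r u, c u) \in F, forall u, u != 0 -> (r (u - 1), c u) \in F
            & (r (0 - 1), c 0) \in Dl]].
Proof.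
move=> PF DlE PE /set0Pn [[i j] ijDl].
have /connectP [s s_path s_last] : connect (bip_adj P) (inr j) (inl i).
  by rewrite PE; apply: connect1; apply: (subsetP DlE).
have closing_s : closing_walk (size s).
  exists i, j; split => //; rewrite s_last.
  exact: sub_walk (sub_bip_adj PF) (walk_path s_path).
have [m [[i0 [j0 [ij0Dl [v [v0 vm v_walk]]]]] m_min]] := ex_minimal_nat closing_s.
exists _, (@walk_row i0 m v), (@walk_col j0 m v); split.
- exact: (walk_row_inj ij0Dl v0 vm v_walk m_min).
- exact: (walk_col_inj ij0Dl v0 vm v_walk m_min).
- exact: (walk_cycle_chordless ij0Dl v0 vm v_walk m_min).
split.
- exact: (walk_cycle_edge ij0Dl v0 vm v_walk).
- exact: (walk_cycle_edge_pred ij0Dl v0 vm v_walk).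
- exact: (walk_cycle_closing ij0Dl v0 vm v_walk).
Qed.
End ChordlessCycle.

Lemma has_signs_support (d n : nat) (A : 'M[int]_(d, n)) (P : {set 'I_d * 'I_n}) :
  P \subset support_entries A -> exists sigma, has_signs A P sigma.
Proof.
move=> /subsetP PA; exists (fun p => 0 < A p.1 p.2) => p /PA; rewrite inE.
by move: (A p.1 p.2) => x /eqP x0; case: ifP => // /negbT; lia.
Qed.

Lemma signr_addb_gt0_sign (x : int) (s : bool) : x != 0 ->
  if s then 0 < (-1) ^+ (s (+) (0 < x)) * x else (-1) ^+ (s (+) (0 < x)) * x < 0.
Proof.
move=> /eqP x0; case: s; case: (boolP (0 < x)) => /= x_pos.
all: by rewrite ?expr0 ?expr1 ?mul1r ?mulN1r; lia.
Qed.

Lemma diag_rank_full_neq0 d (B : 'M[int]_d) :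
  is_diag_mx B -> \rank (toR B) = d -> forall i, B i i != 0.
Proof.
move=> B_diag rkB i; have : toR B \in unitmx by rewrite -row_free_unit /row_free rkB.
rewrite unitmxE unitfE det_map_mx intr_eq0 (det_trig (is_diag_mx_is_trig B_diag)).
by move/prodf_neq0; apply.
Qed.

Section BasicFormMatroid.
Variables (d n : nat) (B : 'M[int]_d).
Hypotheses (B_diag : is_diag_mx B) (B_neq0 : forall i, B i i != 0).

Lemma same_arith_matroid_abs_entry (A1 A2 : 'M[int]_(d, n)) :
  same_arith_matroid (row_mx B A1) (row_mx B A2) -> forall i j, `|A1 i j|%N = `|A2 i j|%N.
Proof.
move=> M12 i j; have := same_arith_matroid_abs_det (@swap_col_inj d n i j) M12.
rewrite !det_swap_col // !abszM => /eqP; rewrite eqn_pmul2l ?absz_gt0 => [/eqP //|].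
by apply/prodf_neq0 => t _.
Qed.

Lemma ex_signed_representation (A : 'M[int]_(d, n)) (P : {set 'I_d * 'I_n})
    (sigma : 'I_d * 'I_n -> bool) :
  P \subset support_entries A -> ~ has_cycle P ->
  exists A', has_signs A' P sigma /\ same_arith_matroid (row_mx B A') (row_mx B A).
Proof.
move=> /subsetP PA P_forest.
have [al [be al_be]] :=
  forest_edge_potential (fun p => sigma p (+) (0 < A p.1 p.2)) P_forest.
pose e x := match split x with inl i => al i | inr j => be j end.
exists (sign_mx al *m A *m sign_mx be); split.
  move=> p /[dup] /PA; rewrite inE => Ap /al_be; rewrite mul_mx_diag mul_diag_mx !mxE.
  by rewrite mulrAC -signr_addb => ->; apply: signr_addb_gt0_sign.
(* [B] is unchanged since its row i and column i get the same sign. *)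
have -> : row_mx B (sign_mx al *m A *m sign_mx be) =
          sign_mx al *m row_mx B A *m sign_mx e.
  apply/matrixP => i x; rewrite !mul_mx_diag !mul_diag_mx !mxE /e.
  case: (split_ordP x) => [i' _|j _]; rewrite ?mxE //.
  have [<-|ii'] := eqVneq i i'; first by rewrite mulrAC -signr_addb addbb mul1r.
  by rewrite (is_diag_mxP B_diag) ?mulr0 ?mul0r.
exact: same_arith_matroid_sign_scale.
Qed.

Lemma signed_representation_uniq (A A1 A2 : 'M[int]_(d, n)) P sigma :
  coordinatizing_path A P -> has_signs A1 P sigma -> has_signs A2 P sigma ->
  same_arith_matroid (row_mx B A1) (row_mx B A) ->
  same_arith_matroid (row_mx B A2) (row_mx B A) -> A1 = A2.
Proof.
move=> [PE _ P_conn] A1_sign A2_sign M1 M2.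
have abs1 := same_arith_matroid_abs_entry M1; have abs2 := same_arith_matroid_abs_entry M2.
have abs12 i j : `|A1 i j|%N = `|A2 i j|%N by rewrite abs1 abs2.
have suppA : support_entries A = support_entries A1.
  by apply/setP => -[i j]; rewrite !inE -!absz_eq0 abs1.
rewrite suppA in PE P_conn.
set Dl := [set p : 'I_d * 'I_n | A1 p.1 p.2 != A2 p.1 p.2].
apply/matrixP => i j; apply/eqP/negPn/negP => A12_ij.
have Dl_neq0 : Dl != set0 by apply/set0Pn; exists (i, j); rewrite inE.
have PF : P \subset support_entries A1 :\: Dl.
  apply/subsetP => p pP; rewrite in_setD (subsetP PE) // andbT inE negbK; apply/eqP.
  move: (A1_sign p pP) (A2_sign p pP) (abs12 p.1 p.2).
  by case: (sigma p); move: (A1 _ _) (A2 _ _) => x y; lia.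
have DlE : Dl \subset support_entries A1.
  apply/subsetP => -[x y]; rewrite !inE /=; apply: contra => /eqP A1_0.
  by move: (abs12 x y); rewrite A1_0 => /esym/eqP; rewrite absz_eq0 => /eqP ->.
have [k' [r [c [r_inj c_inj chordless [edge edge_pred closing]]]]] :=
  ex_chordless_cycle PF DlE P_conn Dl_neq0.
have basis_inj := cycle_col_inj r_inj c_inj.
have := abs_det_cycle_col_neq B_diag r_inj B_neq0 abs12 chordless edge edge_pred closing.
rewrite (same_arith_matroid_abs_det basis_inj M1).
by rewrite (same_arith_matroid_abs_det basis_inj M2) eqxx.
Qed.

End BasicFormMatroid.

Theorem proposition4p1 (d n : nat) (B : 'M[int]_d) (A : 'M[int]_(d, n))
  (P : {set 'I_d * 'I_n}) :
  is_diag_mx B ->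
  \rank (toR B) = d ->
  coordinatizing_path A P ->
  (forall sigma : 'I_d * 'I_n -> bool,
     exists! A' : 'M[int]_(d, n),
       has_signs A' P sigma /\ same_arith_matroid (row_mx B A') (row_mx B A)) /\
  (forall A'' : 'M[int]_(d, n),
     same_arith_matroid (row_mx B A'') (row_mx B A) ->
     exists sigma : 'I_d * 'I_n -> bool,
       has_signs A'' P sigma /\ same_arith_matroid (row_mx B A'') (row_mx B A)).
Proof.
move=> B_diag rkB P_coord; have B_neq0 := diag_rank_full_neq0 B_diag rkB.
have [PA P_forest _] := P_coord.
split=> [sigma|A'' M''].
  have [A' [A'_sign M']] := ex_signed_representation B_diag sigma PA P_forest.
  exists A'; split => // A2 [A2_sign M2].
  exact: (signed_representation_uniq B_diag B_neq0 P_coord A'_sign A2_sign M' M2).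
have [|sigma A''_sign] := @has_signs_support _ _ A'' P; last by exists sigma.
apply/subsetP => p /(subsetP PA); rewrite !inE -!absz_eq0.
by rewrite (same_arith_matroid_abs_entry B_diag B_neq0 M'').
Qed.
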